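(* Let $nw=(a_1\cdots a_n,\nu)\in\mathrm{NW}(\Delta)$, with $\Phi_\circ(nw)=([n],\lambda,\le_1^\circ,\le_2^\circ)$ and $\Phi_\bullet(nw)=([n],\lambda,\le_1^\bullet,\le_2^\bullet)$, and let $1\le i<j\le n$. Then the following are equivalent: (i) $j\le_2^\circ i$; (ii) $i\le_2^\bullet j$; (iii) there exists $(k,\ell)\in\nu$ with $1\le k\le i<j\le\ell\le n$ such that $k$ has odd nesting depth and there is no $(k',\ell')\in\nu$ with $k<k'\le i<j\le\ell'<\ell$.
   Context: Nested words: $\Delta$ finite alphabet. A nesting relation of width $n$ is a relation $\nu$ on $[n]=\{1..n\}$ with: $\nu(i,j)\Rightarrow i<j$; $\nu(i,j),\nu(i,j')\Rightarrow j=j'$ and $\nu(i,j),\nu(i',j)\Rightarrow i=i'$; $\nu(i,j),\nu(i',j'),i<i'\Rightarrow j<i'$ or $j'<j$. A nested word is $(w,\nu)$ with $w=a_1\cdots a_n\in\Delta^+$ and $\nu$ a nesting relation of width $n$; $\mathrm{NW}(\Delta)$ is their set. If $\nu(i,j)$, $i$ is a call and $j$ a return position. The factor $nw[i,j]$ ($i\le j$) is $(a_i\cdots a_j,\{(k-i+1,\ell-i+1):(k,\ell)\in\nu,\ i\le k,\ell\le j\})$. The nesting depth of a call position $k$ is the number of pairs $(k',\ell')\in\nu$ with $k'\le k\le\ell'$ (the number of calls open at $k$, including $k$ itself). Texts: a text over $\Delta$ is $(V,\lambda,\le_1,\le_2)$ with $V$ finite nonempty, $\lambda:V\to\Delta$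 and $\le_1,\le_2$ linear orders on $V$, considered up to isomorphism. For texts on disjoint domains $V,V'$: $\tau\circ\tau'=(V\cup V',\lambda\cup\lambda',\le_1\cup\le_1'\cup V\times V',\le_2\cup\le_2'\cup V\times V')$ and $\tau\bullet\tau'=(V\cup V',\lambda\cup\lambda',\le_1\cup\le_1'\cup V\times V',\le_2\cup\le_2'\cup V'\times V)$. A letter $a$ also denotes the singleton text labeled $a$. Encodings $\Phi_\circ,\Phi_\bullet:\mathrm{NW}(\Delta)\to$ texts, defined recursively: for $nw=(a_1\cdots a_n,\nu)$, if $\nu=\emptyset$ then $\Phi_\circ(nw)=a_1\circ\cdots\circ a_n$ and $\Phi_\bullet(nw)=a_1\bullet\cdots\bullet a_n$; otherwise let $i$ be the least call position, $j$ its return position, $nw'=nw[i+1,j-1]$, $nw''=nw[j+1,n]$, and $\Phi_\circ(nw)=a_1\circ\cdots\circ a_{i-1}\circ(a_i\bullet\Phi_\bullet(nw')\bullet a_j)\circ\Phi_\circ(nw'')$, $\Phi_\bullet(nw)=a_1\bullet\cdots\bullet a_{i-1}\bullet(a_i\circ\Phi_\circ(nw')\circ a_j)\bullet\Phi_\bullet(nw'')$, where factors for empty intervals ($i+1=j$, $j=n$, $i=1$) are omitted. The domain of $\Phi_\circ(nw)$ and of $\Phi_\bullet(nw)$ is identified with $[n]$ so that $\le_1$ is the natural order of $[n]$ and position $i$ is labeled $a_i$. *)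

From mathcomp Require Import all_boot.
Set Implicit Arguments. Unset Strict Implicit. Unset Printing Implicit Defensive.

(* A nested word of width n is a word w : seq Delta with n = size w >= 1 and a
   relation nu on [n] = {1..n}, given as the (finite) list of its pairs.
   Positions are 1-based natural numbers. *)
Definition nesting_relation (n : nat) (nu : seq (nat * nat)) : Prop :=
  (forall i j, (i, j) \in nu -> 1 <= i <= n /\ 1 <= j <= n) /\
  (forall i j, (i, j) \in nu -> i < j) /\
  (forall i j j', (i, j) \in nu -> (i, j') \in nu -> j = j') /\
  (forall i i' j, (i, j) \in nu -> (i', j) \in nu -> i = i') /\
  (forall i j i' j', (i, j) \in nu -> (i', j') \in nu -> i < i' -> j < i' \/ j' < j).

Definition nested_word (Delta : finType) (w : seq Delta) (nu : seq (nat * nat)) : Prop :=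
  0 < size w /\ nesting_relation (size w) nu.

(* nesting depth of a (call) position k: number of pairs (k',l') of nu with
   k' <= k <= l' (nu viewed as a set, hence [undup]). *)
Definition nesting_depth (nu : seq (nat * nat)) (k : nat) : nat :=
  count (fun p => (p.1 <= k) && (k <= p.2)) (undup nu).

(* A text whose domain is a finite set of positions (nats) is represented by the
   enumerations of its domain in increasing <=_1 order and <=_2 order.
   (Labels are lambda(i) = a_i and play no role below.)  The empty text
   ([::],[::]) is only used as a neutral element, modelling "omitted factors". *)
Record text := Text { ord1 : seq nat; ord2 : seq nat }.

Definition tnil : text := Text [::] [::].
Definition tsingle (x : nat) : text := Text [:: x] [:: x].

Definition tcirc (t t' : text) : text := Text (ord1 t ++ ord1 t') (ord2 t ++ ord2 t').
Definition tbullet (t t' : text) : text := Text (ord1 t ++ ord1 t') (ord2 t' ++ ord2 t).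

Definition top (b : bool) : text -> text -> text := if b then tcirc else tbullet.

Definition tseq (b : bool) (s : seq nat) : text := foldr (fun x t => top b (tsingle x) t) tnil s.

Definition le2 (t : text) (x y : nat) : bool := index x (ord2 t) <= index y (ord2 t).

(* [phi fuel b nu lo hi] encodes the factor nw[lo,hi] (positions kept absolute,
   which is the identification of the domain with positions); b = true gives
   Phi_circ, b = false gives Phi_bullet.  The fuel only ensures termination
   (the interval shrinks strictly at each recursive call). *)
Fixpoint phi (fuel : nat) (b : bool) (nu : seq (nat * nat)) (lo hi : nat) : text :=
  match fuel with
  | 0 => tnil
  | f.+1 =>
    let pos := iota lo (hi.+1 - lo) in
    let calls := [seq k <- pos | has (fun p => (p.1 == k) && (p.2 <= hi)) nu] in
    match calls with
    | [::] => tseq b pos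
    | i :: _ =>
      let j := (nth (0, 0) nu (find (fun p => p.1 == i) nu)).2 in
      top b (tseq b (iota lo (i - lo)))
        (top b (top (~~ b) (top (~~ b) (tsingle i) (phi f (~~ b) nu i.+1 j.-1)) (tsingle j))
               (phi f b nu j.+1 hi))
    end
  end.

Definition Phi_circ (Delta : finType) (w : seq Delta) (nu : seq (nat * nat)) : text :=
  phi (size w).+1 true nu 1 (size w).
Definition Phi_bullet (Delta : finType) (w : seq Delta) (nu : seq (nat * nat)) : text :=
  phi (size w).+1 false nu 1 (size w).

From mathcomp Require Import all_boot zify.
Set Implicit Arguments. Unset Strict Implicit. Unset Printing Implicit Defensive.

(** Each operand of [tcirc] comes first in the second order and each operand of
    [tbullet] comes last, while a call-return pair [(k, l)] switches the
    operation used for the positions it encloses (and puts [k], [l] around them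
    with that switched operation).  Hence for positions [x < y] of a factor the
    second order lists them in position order iff the outer operation, flipped
    once for every pair of the factor enclosing both, is the circle.  For the
    whole word this gives [j <=_2 i] in [Phi_circ] iff an odd number of pairs
    enclose [[i, j]] iff [i <=_2 j] in [Phi_bullet]; the enclosing pairs form a
    chain, and the nesting depth of its innermost call is its length. *)

Definition before (s : seq nat) (x y : nat) : bool := index x s < index y s.

Lemma before_cat s1 s2 x y :
  before (s1 ++ s2) x y =
  if x \in s1 then (y \notin s1) || before s1 x y else (y \notin s1) && before s2 x y.
Proof.
rewrite /before !index_cat.
case: ifP => xs1; case: ifP => ys1 //=; rewrite ?ltn_add2l //.
- by rewrite ltn_addr // index_mem.
- by apply/negbTE; rewrite -leqNgt (leq_trans (index_size _ _)) ?leq_addr.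
Qed.

Lemma ord2_top b X Y : ord2 (top b X Y) = if b then ord2 X ++ ord2 Y else ord2 Y ++ ord2 X.
Proof. by case: b. Qed.

Lemma mem_top b X Y x : (x \in ord2 (top b X Y)) = (x \in ord2 X) || (x \in ord2 Y).
Proof. by rewrite ord2_top; case: b; rewrite mem_cat // orbC. Qed.

Section BeforeTop.
Variables (b : bool) (X Y : text) (x y : nat).

Lemma before_top_inl : x \in ord2 X -> y \in ord2 X -> x \notin ord2 Y -> y \notin ord2 Y ->
  before (ord2 (top b X Y)) x y = before (ord2 X) x y.
Proof.
by rewrite ord2_top => xX yX /negbTE xY /negbTE yY; case: b; rewrite before_cat ?xX ?yX ?xY ?yY.
Qed.

Lemma before_top_inr : x \in ord2 Y -> y \in ord2 Y -> x \notin ord2 X -> y \notin ord2 X ->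
  before (ord2 (top b X Y)) x y = before (ord2 Y) x y.
Proof.
by rewrite ord2_top => xY yY /negbTE xX /negbTE yX; case: b; rewrite before_cat ?xX ?yX ?xY ?yY.
Qed.

Lemma before_top_across : x \in ord2 X -> y \in ord2 Y -> x \notin ord2 Y -> y \notin ord2 X ->
  before (ord2 (top b X Y)) x y = b.
Proof.
by rewrite ord2_top => xX yY /negbTE xY /negbTE yX; case: b; rewrite before_cat ?xX ?yX ?xY ?yY.
Qed.

End BeforeTop.

Lemma le2_before t x y : x \in ord2 t -> x != y -> le2 t x y = before (ord2 t) x y.
Proof.
move=> xt neq; rewrite /le2 /before leq_eqVlt.
suff /negbTE -> : index x (ord2 t) != index y (ord2 t) by [].
apply: contra neq => /eqP e; case yt: (y \in ord2 t).
  by rewrite -(nth_index x xt) e nth_index.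
by move: xt; rewrite -index_mem e index_mem yt.
Qed.

Lemma filter_iota_cons (P : pred nat) lo n i r :
  [seq k <- iota lo n | P k] = i :: r ->
  [/\ P i, lo <= i < lo + n & forall k, lo <= k < i -> ~~ P k].
Proof.
elim: n lo => [|n IH] lo //=; case: ifP => Plo.
  by case=> <- _; split=> //; lia.
move=> /IH [Pi hi min]; split=> //; first lia.
by move=> k hk; case: (k =P lo) => [->|?]; [rewrite Plo | apply: min; lia].
Qed.

Definition enclosing (nu : seq (nat * nat)) (lo hi x y : nat) : nat :=
  count (fun p : nat * nat => (lo <= p.1 <= x) && (y <= p.2 < hi)) (undup nu).

Lemma eq_enclosing nu lo hi lo' hi' x y :
  (forall k l, (k, l) \in nu ->
     (lo <= k <= x) && (y <= l < hi) = (lo' <= k <= x) && (y <= l < hi')) ->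
  enclosing nu lo hi x y = enclosing nu lo' hi' x y.
Proof. by move=> H; apply: eq_in_count => -[k l]; rewrite mem_undup; apply: H. Qed.

Lemma enclosing_eq0 nu lo hi x y :
  (forall k l, (k, l) \in nu -> lo <= k <= x -> y <= l < hi -> False) ->
  enclosing nu lo hi x y = 0.
Proof.
move=> H; apply/eqP; rewrite -leqn0 leqNgt -has_count.
by apply/hasP => -[[k l]]; rewrite mem_undup => kl /andP[]; apply: H.
Qed.

Lemma innermost_enclosing nu lo hi x y :
  0 < enclosing nu lo hi x y ->
  exists k l, (k, l) \in nu /\ lo <= k <= x /\ y <= l < hi /\
    ~ (exists k' l', (k', l') \in nu /\ k < k' <= x /\ y <= l' < l).
Proof.
pose P k := has (fun p : nat * nat => (p.1 == k) && (lo <= k <= x) && (y <= p.2 < hi)) nu.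
rewrite -has_count => /hasP [[k0 l0]]; rewrite mem_undup /= => kl0 hkl0.
have exP : exists k, P k by exists k0; apply/hasP; exists (k0, l0); rewrite //= eqxx.
have ubP k : P k -> k <= x by case/hasP => -[? ?] _ /=; lia.
case: (ex_maxnP exP ubP) => k /hasP [[a l] al /= /andP [/andP [/eqP ak hk] hl]] kmax.
subst a; exists k, l; do !split=> //.
move=> [k' [l' [kl' [hk' hl']]]].
have /kmax : P k' by apply/hasP; exists (k', l'); rewrite //= eqxx; lia.
lia.
Qed.

Section Encoding.

Variable nu : seq (nat * nat).
Hypothesis nu_lt : forall k l, (k, l) \in nu -> k < l.
Hypothesis nu_fun : forall k l l', (k, l) \in nu -> (k, l') \in nu -> l = l'.
Hypothesis nu_inj : forall k k' l, (k, l) \in nu -> (k', l) \in nu -> k = k'.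
Hypothesis nu_nest : forall k l k' l', (k, l) \in nu -> (k', l') \in nu ->
  k < k' -> l < k' \/ l' < l.

Lemma enclosing_close i l x y : (i, l) \in nu -> i <= x -> y <= l ->
  enclosing nu i l.+1 x y = (enclosing nu i l x y).+1.
Proof.
move=> il hx hy; pose P := fun p : nat * nat => (i <= p.1 <= x) && (y <= p.2 < l).
have -> : enclosing nu i l.+1 x y = count (predU (pred1 (i, l)) P) (undup nu).
  apply: eq_in_count => -[k l']; rewrite mem_undup /= xpair_eqE => kl'.
  case: (l' =P l) => [el|ne]; last by rewrite andbF /P /=; lia.
  by subst l'; rewrite (nu_inj kl' il) eqxx /P /=; lia.
have disj : count (predI (pred1 (i, l)) P) (undup nu) = 0.
  apply/eqP; rewrite -leqn0 leqNgt -has_count.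
  by apply/hasP => -[[k l']] _ /= /andP [/eqP [_ ->]]; rewrite /P /=; lia.
have := count_predUI (pred1 (i, l)) P (undup nu).
by rewrite disj count_uniq_mem ?undup_uniq // mem_undup il addn0.
Qed.

Definition encodes (t : text) (b : bool) (lo hi : nat) : Prop :=
  (forall x, (x \in ord2 t) = (lo <= x < hi)) /\
  (forall x y, lo <= x -> x < y -> y < hi ->
     before (ord2 t) x y = b (+) odd (enclosing nu lo hi x y)).

Lemma encodes_nil b lo : encodes tnil b lo lo.
Proof. by split=> [x|x y]; rewrite ?in_nil; lia. Qed.

Lemma encodes_single b x : encodes (tsingle x) b x x.+1.
Proof. by split=> [z|z y]; rewrite ?inE; lia. Qed.

Lemma encodes_top b X Y lo m hi : lo <= m <= hi ->
  (forall k l, (k, l) \in nu -> lo <= k < m -> m <= l < hi -> False) ->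
  encodes X b lo m -> encodes Y b m hi -> encodes (top b X Y) b lo hi.
Proof.
move=> hm nocross [memX ordX] [memY ordY]; split=> [z|x y hx hxy hy].
  by rewrite mem_top memX memY; lia.
have [ym|my] := ltnP y m.
  rewrite before_top_inl ?memX ?memY; try lia.
  rewrite ordX //; congr (_ (+) odd _); apply: eq_enclosing => k l kl.
  by have := nocross k l kl; lia.
have [xm|mx] := ltnP x m.
  rewrite before_top_across ?memX ?memY ?enclosing_eq0 ?addbF //; try lia.
  by move=> k l kl hk hl; apply: (nocross k l kl); lia.
rewrite before_top_inr ?memX ?memY; try lia.
rewrite ordY //; congr (_ (+) odd _); apply: eq_enclosing => k l kl.
by have := nocross k l kl; lia.
Qed.

Lemma encodes_tseq b lo n :
  (forall k l, (k, l) \in nu -> lo <= k -> l < lo + n -> False) ->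
  encodes (tseq b (iota lo n)) b lo (lo + n).
Proof.
elim: n lo => [|n IH] lo nocall; first by rewrite addn0; apply: encodes_nil.
apply: (@encodes_top _ _ _ _ lo.+1); first lia.
- by move=> k l kl hk hl; apply: (nocall k l kl); lia.
- exact: encodes_single.
rewrite -addSnnS; apply: IH => k l kl hk hl; apply: (nocall k l kl); lia.
Qed.

Lemma encodes_open c i l B : (i, l) \in nu ->
  encodes B c i.+1 l -> encodes (top c (tsingle i) B) c i l.
Proof.
move=> il encB; apply: (@encodes_top _ _ _ _ i.+1) => //.
- by have := nu_lt il; lia.
- move=> k l' kl' hk hl'; have ek : k = i by lia.
  by subst k; have := nu_fun kl' il; lia.
exact: encodes_single.
Qed.

Lemma encodes_close c i l I : (i, l) \in nu ->
  encodes I (~~ c) i l -> encodes (top (~~ c) I (tsingle l)) c i l.+1.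
Proof.
move=> il [memI ordI]; split=> [z|x y hx hxy hy].
  by have := nu_lt il; rewrite mem_top memI inE; lia.
rewrite enclosing_close //.
have [yl|ly] := ltnP y l.
  by rewrite before_top_inl ?memI ?inE ?ordI ?addbN ?addNb //; lia.
have ey : y = l by lia.
subst y; rewrite before_top_across ?memI ?inE ?enclosing_eq0 ?addbT //; lia.
Qed.

Lemma find_partner i l : (i, l) \in nu ->
  (nth (0, 0) nu (find (fun p : nat * nat => p.1 == i) nu)).2 = l.
Proof.
move=> il; have has_i : has (fun p : nat * nat => p.1 == i) nu by apply/hasP; exists (i, l).
have mem_i : nth (0, 0) nu (find (fun p : nat * nat => p.1 == i) nu) \in nu.
  by rewrite mem_nth // -has_find.
move: mem_i (nth_find (0, 0) has_i); case: (nth _ _ _) => a c /= ac /eqP ea.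
by subst a; apply: nu_fun ac il.
Qed.

Lemma encodes_phi f b lo hi : lo <= hi.+1 -> hi.+1 - lo <= f ->
  encodes (phi f b nu lo hi) b lo hi.+1.
Proof.
elim: f b lo hi => [|f IH] b lo hi hlo hf /=.
  have -> : lo = hi.+1 by lia.
  exact: encodes_nil.
set calls := [seq k <- _ | _]; case E: calls => [|i r].
  have := @encodes_tseq b lo (hi.+1 - lo); rewrite subnKC //; apply=> k l kl hk hl.
  have : k \in calls.
    rewrite mem_filter mem_iota; apply/andP; split; last by have := nu_lt kl; lia.
    by apply/hasP; exists (k, l); rewrite //= eqxx; lia.
  by rewrite E.
have [/hasP [[k0 l0] il0 /= /andP [/eqP ek l0hi]] /andP [loi ihi] nocall] :=
  filter_iota_cons E.
subst k0; rewrite (find_partner il0) /=; have i_l0 := nu_lt il0.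
have no_early k l : (k, l) \in nu -> lo <= k < i -> l <= hi -> False.
  by move=> kl hk hl; apply: (negP (nocall k hk)); apply/hasP; exists (k, l) => //=; rewrite eqxx.
apply: (@encodes_top _ _ _ _ i); first lia.
- by move=> k l kl hk hl; apply: (no_early k l kl); lia.
- have := @encodes_tseq b lo (i - lo); rewrite subnKC //; apply=> k l kl hk hl.
  by apply: (no_early k l kl); have := nu_lt kl; lia.
apply: (@encodes_top _ _ _ _ l0.+1); first lia.
- move=> k l kl hk hl; have [ek|ik] : k = i \/ i < k by lia.
    by subst k; have := nu_fun kl il0; lia.
  by have := nu_nest il0 kl ik; lia.
- apply: encodes_close => //; apply: encodes_open => //.
  by have := IH (~~ b) i.+1 l0.-1; rewrite prednK; [apply; lia | lia].
by apply: IH; lia.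
Qed.

Lemma nesting_depth_enclosing n k l i j :
  (forall a b, (a, b) \in nu -> 1 <= a <= n /\ 1 <= b <= n) ->
  (k, l) \in nu -> k <= i -> i < j -> j <= l ->
  ~ (exists k' l', (k', l') \in nu /\ k < k' <= i /\ j <= l' < l) ->
  nesting_depth nu k = enclosing nu 1 n.+1 i j.
Proof.
move=> range kl hk hij hjl inner; apply: eq_in_count => -[a b]; rewrite mem_undup /= => ab.
have := range _ _ ab; have := nu_lt ab; have := nu_lt kl => ? ? ?.
apply/idP/idP => /andP [ha hb].
  case: (ltngtP a k) => hak.
  - by case: (nu_nest ab kl hak); lia.
  - lia.
  - by subst a; have := nu_fun ab kl; lia.
case: (ltngtP a k) => hak; [lia | | lia].
case: (ltngtP b l) => hbl.
- by case: inner; exists a, b; split=> //; lia.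
- by case: (nu_nest kl ab hak); lia.
- by subst b; have := nu_inj ab kl; lia.
Qed.

End Encoding.

Theorem lemma5p3 (Delta : finType) (w : seq Delta) (nu : seq (nat * nat)) :
  nested_word w nu ->
  forall i j : nat, 1 <= i -> i < j -> j <= size w ->
    (le2 (Phi_circ w nu) j i <-> le2 (Phi_bullet w nu) i j) /\
    (le2 (Phi_bullet w nu) i j <->
     exists k l, (k, l) \in nu /\ 1 <= k <= i /\ j <= l <= size w /\
       odd (nesting_depth nu k) /\
       ~ (exists k' l', (k', l') \in nu /\ k < k' <= i /\ j <= l' < l)).
Proof.
move=> [_ [range [lt [fn [inj nest]]]]] i j hi hij hj.
have enc b : encodes nu (phi (size w).+1 b nu 1 (size w)) b 1 (size w).+1.
  by apply: encodes_phi => //; lia.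
set e := enclosing nu 1 (size w).+1 i j.
have circ : le2 (Phi_circ w nu) j i = odd e.
  have [_ ord] := enc true.
  by rewrite /le2 /Phi_circ leqNgt -/(before _ i j) ord // addTb negbK.
have bullet : le2 (Phi_bullet w nu) i j = odd e.
  have [mem ord] := enc false.
  by rewrite /Phi_bullet le2_before ?mem ?ord //; lia.
rewrite circ bullet; split=> //; split.
  move=> odd_e; have [k [l [kl [hk [hl inner]]]]] := innermost_enclosing (odd_gt0 odd_e).
  have depth : nesting_depth nu k = e.
    by apply: (nesting_depth_enclosing lt fn inj nest range kl) => //; lia.
  by exists k, l; rewrite depth; do 4?split=> //; lia.
move=> [k [l [kl [hk [hl [odd_k inner]]]]]].
by rewrite /e -(nesting_depth_enclosing lt fn inj nest range kl) //; lia.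
Qed.
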